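(* Let $A\in\mathbb{C}^{n\times n}$ with $\mathrm{Ind}(A)=k$, and $m\in\mathbb{N}=\{1,2,\dots\}$. Then the system $$AX=(A^{\mathrm{cEP}})^mA^mP_{A^m},\qquad \mathcal{R}(X)\subseteq\mathcal{R}(A^k)$$ in $X\in\mathbb{C}^{n\times n}$ is consistent and its unique solution is $X=A^{\#_m}$.
   Context: For $A\in\mathbb{C}^{n\times n}$: $A^\dagger$ Moore–Penrose inverse, $P_A=AA^\dagger$, $\mathcal{R}(\cdot)$ column space. The index $\mathrm{Ind}(A)$ is the smallest nonnegative integer $k$ with $\mathcal{R}(A^k)=\mathcal{R}(A^{k+1})$ ($A^0=I_n$). The core-EP inverse $A^{\mathrm{cEP}}$ is the unique $X$ with $XAX=X$ and $\mathcal{R}(X)=\mathcal{R}(X^* )=\mathcal{R}(A^k)$. For $m\in\mathbb{N}$, the $m$-weak group inverse is $A^{\mathrm{WG}_m}:=(A^{\mathrm{cEP}})^{m+1}A^m$ and the $m$-weak core inverse is $A^{\#_m}:=A^{\mathrm{WG}_m}P_{A^m}$. *)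

(* Matrices over an arbitrary numClosedFieldType C
   (an algebraically closed field with conjugation and norm; the complex
   numbers are an instance). *)
From HB Require Import structures.
From mathcomp Require Import all_boot all_order all_algebra.
From Stdlib Require Import ClassicalEpsilon.
Set Implicit Arguments. Unset Strict Implicit. Unset Printing Implicit Defensive.
Import Order.TTheory GRing.Theory Num.Theory.
Local Open Scope ring_scope.

Section Defs.
Variables (C : numClosedFieldType) (n : nat).
Implicit Types A X : 'M[C]_n.

Definition ctr A : 'M[C]_n := map_mx Num.conj A^T.

(* column-space inclusion R(X) ⊆ R(Y) and equality R(X) = R(Y),
   via row spaces of transposes *)
Definition colincl (p : nat) (X : 'M[C]_(n, p)) (Y : 'M[C]_(n, p)) : bool :=
  (X^T <= Y^T)%MS.
Definition coleq (X Y : 'M[C]_n) : bool := (X^T == Y^T)%MS.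

Definition is_MP A X : Prop :=
  [/\ A *m X *m A = A, X *m A *m X = X,
      ctr (A *m X) = A *m X & ctr (X *m A) = X *m A].

Definition mpinv A : 'M[C]_n := epsilon (inhabits A) (is_MP A).

Definition projA A : 'M[C]_n := A *m mpinv A.

Definition is_index A (k : nat) : Prop :=
  coleq (A ^+ k) (A ^+ k.+1) /\ forall j, (j < k)%N -> ~~ coleq (A ^+ j) (A ^+ j.+1).

Definition is_coreEP A X : Prop :=
  exists k, [/\ is_index A k, X *m A *m X = X,
                coleq X (A ^+ k) & coleq (ctr X) (A ^+ k)].
Definition coreEP A : 'M[C]_n := epsilon (inhabits A) (is_coreEP A).

Definition wginv (m : nat) A : 'M[C]_n := (coreEP A) ^+ m.+1 *m A ^+ m.
Definition wcoreinv (m : nat) A : 'M[C]_n := wginv m A *m projA (A ^+ m).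

End Defs.

(* Let E be the core-EP inverse of A.  From E A E = E and
   R(E) = R(A^k) = R(A^(k+1)) ⊆ R(A E), the idempotent A E fixes R(E), so
   A E^2 = E; hence A A^{#_m} = E^m A^m P_{A^m}, while R(A^{#_m}) ⊆ R(E) =
   R(A^k).  Solutions are unique because A D = 0 with R(D) ⊆ R(E) forces
   D = E A D = 0.  As coreEP is defined by choice, its existence must also be
   shown: if the columns of B form a basis of R(A^k), then
   B (B^* A B)^-1 B^* is a core-EP inverse. *)

From mathcomp Require Import all_boot all_order all_algebra.
From Stdlib Require Import ClassicalEpsilon.
Set Implicit Arguments. Unset Strict Implicit. Unset Printing Implicit Defensive.
Import GRing.Theory Num.Theory.
Local Open Scope ring_scope.

Section ColumnSpaces.
Variables (C : numClosedFieldType) (n : nat).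

Lemma col_submxP (p q : nat) (X : 'M[C]_(n, p)) (Y : 'M[C]_(n, q)) :
  reflect (exists D : 'M[C]_(q, p), X = Y *m D) (X^T <= Y^T)%MS.
Proof.
apply: (iffP submxP) => [[D eD] | [D ->]].
  by exists D^T; rewrite -[X]trmxK eD trmx_mul trmxK.
by exists D^T; rewrite trmx_mul.
Qed.

Lemma col_submxMr (p q : nat) (Y : 'M[C]_(n, q)) (D : 'M[C]_(q, p)) :
  ((Y *m D)^T <= Y^T)%MS.
Proof. by apply/col_submxP; exists D. Qed.

Lemma col_submxMl (p q : nat) (A : 'M[C]_n)
    (X : 'M[C]_(n, p)) (Y : 'M[C]_(n, q)) :
  (X^T <= Y^T)%MS -> ((A *m X)^T <= (A *m Y)^T)%MS.
Proof. by rewrite !trmx_mul; apply: submxMr. Qed.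

End ColumnSpaces.

Lemma map_conjK (C : numClosedFieldType) (p q : nat) (M : 'M[C]_(p, q)) :
  map_mx Num.conj (map_mx Num.conj M) = M.
Proof. by apply/matrixP => i j; rewrite !mxE conjCK. Qed.

Lemma mulmx_conjtr_eq0 (C : numClosedFieldType) (p q : nat) (Y : 'M[C]_(p, q)) :
  Y *m (map_mx Num.conj Y)^T = 0 -> Y = 0.
Proof.
move/matrixP=> YY0; apply/matrixP=> i j; rewrite mxE.
have : \sum_l Y i l * (Y i l)^* = 0.
  by move: (YY0 i i); rewrite !mxE; under eq_bigr do rewrite !mxE.
move/psumr_eq0P => /(_ (fun l _ => mul_conjC_ge0 (Y i l)) j isT).
by move/eqP; rewrite mul_conjC_eq0 => /eqP.
Qed.

Lemma conj_gram_unitmx (C : numClosedFieldType) (r n : nat) (B : 'M[C]_(r, n)) :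
  row_free B -> map_mx Num.conj B *m B^T \in unitmx.
Proof.
move=> freeB; rewrite -row_free_unit; apply: inj_row_free => v vG0.
have conjB_free : row_free (map_mx Num.conj B) by rewrite row_free_map.
apply/eqP; rewrite -(mulmx_free_eq0 _ conjB_free); apply/eqP/mulmx_conjtr_eq0.
by rewrite map_mxM map_conjK trmx_mul !mulmxA -(mulmxA v) vG0 !mul0mx.
Qed.

Lemma mxrank_ctr (C : numClosedFieldType) (n : nat) (X : 'M[C]_n) :
  \rank (ctr X) = \rank X.
Proof. by rewrite mxrank_map mxrank_tr. Qed.

Lemma coleq_rank (C : numClosedFieldType) (n : nat) (X Y : 'M[C]_n) :
  colincl X Y -> \rank X = \rank Y -> coleq X Y.
Proof.
by move=> XY rXY; rewrite /coleq -(mxrank_leqif_eq XY) !mxrank_tr rXY.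
Qed.

Section CoreEPConstruction.
Variables (C : numClosedFieldType) (n : nat) (A M : 'M[C]_n).
Hypothesis AM_M : coleq (A *m M) M.

Let Bt := row_base M^T.
Let B := Bt^T.
Let Bs := map_mx Num.conj Bt.

Let B_M : (B^T == M^T)%MS.
Proof. by rewrite /B trmxK; apply/eqmxP; apply: eq_row_base. Qed.

(* B^* A B = (B^* B) T where A B = B T; the Gram matrix B^* B is invertible,
   and so is T because R(A B) = R(B). *)
Lemma basis_compression_unitmx : Bs *m A *m B \in unitmx.
Proof.
have [BM MB] := andP B_M; have [AMM MAM] := andP AM_M.
have [T AB_BT] : exists T : 'M[C]_(\rank M^T), A *m B = B *m T.
  apply/col_submxP; apply: submx_trans (col_submxMl A BM) _.
  by apply: submx_trans AMM MB.
have [S B_ABS] : exists S : 'M[C]_(\rank M^T), B = A *m B *m S.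
  apply/col_submxP; apply: submx_trans BM _.
  by apply: submx_trans MAM (col_submxMl A MB).
have TS1 : T *m S = 1%:M.
  apply: trmx_inj; apply: (row_free_inj (row_base_free M^T)).
  by rewrite -/Bt -[Bt]trmxK -!trmx_mul mulmx1 mulmxA -AB_BT -B_ABS.
rewrite -mulmxA AB_BT mulmxA unitmx_mul conj_gram_unitmx ?row_base_free //.
by case: (mulmx1_unit TS1).
Qed.

Let Z := invmx (Bs *m A *m B).
Let X := B *m Z *m Bs.

Let XAB : X *m A *m B = B.
Proof.
by rewrite /X -!mulmxA (mulmxA Bs) /Z mulVmx ?basis_compression_unitmx ?mulmx1.
Qed.

Lemma exists_outer_inverse_range :
  exists X : 'M[C]_n, [/\ X *m A *m X = X, coleq X M & coleq (ctr X) M].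
Proof.
exists X.
have [BM MB] := andP B_M.
have X_M : coleq X M.
  apply/andP; split.
    by rewrite /X -mulmxA; apply: submx_trans (col_submxMr _ _) BM.
  by apply: submx_trans MB _; rewrite -XAB -mulmxA col_submxMr.
split=> //; first by rewrite {3}/X !mulmxA XAB.
have rank_ctrX : \rank (ctr X) = \rank M.
  by rewrite mxrank_ctr -[\rank X]mxrank_tr (eqmx_rank X_M) mxrank_tr.
apply: coleq_rank rank_ctrX.
have -> : ctr X = B *m map_mx Num.conj (Z^T *m B^T).
  by rewrite /ctr /X !trmx_mul map_mxM -map_trmx map_conjK.
exact: submx_trans (col_submxMr _ _) BM.
Qed.

End CoreEPConstruction.

Lemma is_index_uniq (C : numClosedFieldType) (n : nat) (A : 'M[C]_n)
    (k l : nat) :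
  is_index A k -> is_index A l -> k = l.
Proof.
move=> [Ek ltk] [El ltl].
by case: (ltngtP k l) => // [/ltl | /ltk]; rewrite ?Ek ?El.
Qed.

Lemma coreEP_spec (C : numClosedFieldType) (n : nat) (A : 'M[C]_n) (k : nat) :
  is_index A k ->
  coreEP A *m A *m coreEP A = coreEP A /\ coleq (coreEP A) (A ^+ k).
Proof.
move=> indk.
have [|l [indl XAX XAk _]] := epsilon_spec (inhabits A) (is_coreEP A).
  have AAk_Ak : coleq (A *m A ^+ k) (A ^+ k).
    by have [] := indk; rewrite /coleq mulmxE -exprS andbC.
  by have [X []] := exists_outer_inverse_range AAk_Ak; exists X, k.
by rewrite (is_index_uniq indk indl).
Qed.

Section OuterInverse.
Variables (C : numClosedFieldType) (n : nat) (A X : 'M[C]_n).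
Hypotheses (XAX : X *m A *m X = X) (X_AX : colincl X (A *m X)).

Lemma outer_inverse_mulKl : A *m X *m X = X.
Proof.
have /col_submxP [W XAXW] := X_AX.
by rewrite {2}XAXW !mulmxA -(mulmxA A X A) -(mulmxA A (X *m A)) XAX -XAXW.
Qed.

Lemma outer_inverse_exprKl (j : nat) : A *m X ^+ j.+2 = X ^+ j.+1.
Proof.
by rewrite exprS exprS !mulmxE mulrA mulrA -!mulmxE outer_inverse_mulKl.
Qed.

Lemma outer_inverse_annihilated_eq0 (D : 'M[C]_n) :
  A *m D = 0 -> colincl D X -> D = 0.
Proof.
move=> AD0 /col_submxP [E DXE].
by rewrite DXE -XAX -!mulmxA -DXE AD0 mulmx0.
Qed.

End OuterInverse.

Lemma colincl_mul_of_coleq_index (C : numClosedFieldType) (n : nat)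
    (A X : 'M[C]_n) (k : nat) :
  is_index A k -> coleq X (A ^+ k) -> colincl X (A *m X).
Proof.
move=> [/andP [Ak_Ak1 _] _] /andP [X_Ak Ak_X].
rewrite /colincl; apply: submx_trans X_Ak _; apply: submx_trans Ak_Ak1 _.
by rewrite exprS -mulmxE col_submxMl.
Qed.

Theorem theorem4p10 (C : numClosedFieldType) (n : nat) (A : 'M[C]_n)
    (k m : nat) :
  is_index A k -> (0 < m)%N ->
  (exists X : 'M[C]_n,
      A *m X = (coreEP A) ^+ m *m A ^+ m *m projA (A ^+ m) /\ colincl X (A ^+ k)) /\
  (forall X : 'M[C]_n,
      A *m X = (coreEP A) ^+ m *m A ^+ m *m projA (A ^+ m) /\ colincl X (A ^+ k) <->
      X = wcoreinv m A).
Proof.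
move=> indk; case: m => // m _.
have [EAE E_Ak] := coreEP_spec indk.
have E_AE := colincl_mul_of_coleq_index indk E_Ak.
have [E_sub_Ak Ak_sub_E] := andP E_Ak.
set W := wcoreinv m.+1 A.
have AW : A *m W = coreEP A ^+ m.+1 *m A ^+ m.+1 *m projA (A ^+ m.+1).
  by rewrite /W /wcoreinv /wginv 2!mulmxA (outer_inverse_exprKl EAE E_AE).
have W_Ak : colincl W (A ^+ k).
  rewrite /colincl; apply: (submx_trans _ E_sub_Ak).
  by rewrite /W /wcoreinv /wginv exprS -mulmxE -!mulmxA col_submxMr.
split; first by exists W.
move=> X; split=> [[AX X_Ak] | ->] //; apply/eqP; rewrite -subr_eq0; apply/eqP.
apply: (outer_inverse_annihilated_eq0 EAE).
  by rewrite mulmxBr AX AW subrr.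
rewrite /colincl; apply: (submx_trans _ Ak_sub_E).
by rewrite linearB /= addmx_sub ?eqmx_opp.
Qed.
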